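(* In the setting below, assume $Z$ is monotone on $[0,x_+]$, the initial data is the step $p_0(\xi)=1$ for $\xi\le0$ and $p_0(\xi)=0$ for $\xi>0$, and $e^{-\pi}<Z_+/Z_-<e^{\pi}$. Then $$\sum_{m=0}^\infty T_{2m}^\infty=\frac{2Z_+}{Z_-+Z_+}=C_G\,\operatorname{sech}(\log C_G),\qquad \sum_{m=0}^\infty R_{2m+1}^\infty=\frac{Z_+-Z_-}{Z_-+Z_+}=\tanh(\log C_G),$$ where $T_{2m}^\infty=\lim_{t\to\infty}T_{2m}(t)$ and $R_{2m+1}^\infty=\lim_{t\to\infty}R_{2m+1}(t)$. Both series converge.
   Context: Setting. Fix $x_+>0$. Let $K,\rho:\mathbb R\to(0,\infty)$ be continuous. On $(-\infty,0)$ they are constant, $(K,\rho)=(K_-,\rho_-)$; on $(x_+,\infty)$ they are constant, $(K,\rho)=(K_+,\rho_+)$; and on $[0,x_+]$ they are continuously differentiable. Define $Z=\sqrt{K\rho}$ and $c=\sqrt{K/\rho}$, with constant values $Z_\pm$, $c_\pm$ outside $[0,x_+]$. Let $r(x)=Z'(x)/(2Z(x))$ on $[0,x_+]$, $\tau(x)=\int_0^x ds/c(s)$, $t_+=\tau(x_+)$, and $C_G=\sqrt{Z_+/Z_-}$. A sequence $\mathbf x=(x_1,\dots,x_n)$ is alternating if $x_1\ge x_2\le x_3\ge\cdots$, that is, $x_j\le x_{j-1}$ for even $j\ge2$ and $x_j\ge x_{j-1}$ for odd $j\ge3$. Let $\mathcal P_n^{[0,x_+]}$ be the set of alternating $\mathbf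 x\in[0,x_+]^n$, and put $\hat t(\mathbf x)=2\sum_{j=1}^n(-1)^{j+1}\tau(x_j)$. Define $$\xi_R(\mathbf x,x,t)=-c_-(t-\hat t(\mathbf x)+\tau(x)),\qquad \xi_T(\mathbf x,x,t)=-c_-(t-\hat t(\mathbf x)-\tau(x)).$$ For $m\ge0$ define $$R_{2m+1}(t)=(-1)^m\int_{\mathcal P_{2m+1}^{[0,x_+]}}p_0(\xi_R(\mathbf x,0,t))\prod_{j=1}^{2m+1}r(x_j)\,d\mathbf x,$$ $$T_{2m}(t)=(-1)^mC_G\int_{\mathcal P_{2m}^{[0,x_+]}}p_0(\xi_T(\mathbf x,x_+,t))\prod_{j=1}^{2m}r(x_j)\,d\mathbf x,$$ with $T_0(t)=C_G\,p_0(-c_-(t-t_+))$. *)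

From Stdlib Require Import Reals Lra List ClassicalEpsilon.
Import ListNotations.
Open Scope R_scope.

(* Total Riemann integral: the Stdlib Riemann integral when f is Riemann
   integrable between a and b (oriented), and 0 otherwise. *)
Definition RInt (f : R -> R) (a b : R) : R :=
  match excluded_middle_informative (inhabited (Riemann_integrable f a b)) with
  | left H => RiemannInt (epsilon H (fun _ => True))
  | right _ => 0
  end.

Definition cont_within (g : R -> R) (a b x : R) : Prop :=
  limit1_in g (fun y => a <= y <= b) (g x) x.

(* f is continuously differentiable on [a,b] with derivative df:
   f' = df on (a,b) and df extends continuously to [a,b]
   (equivalently, one-sided derivatives at the endpoints, since f is
   continuous on [a,b]). *)
Definition C1_on (f df : R -> R) (a b : R) : Prop :=
  (forall x, a <= x <= b -> cont_within f a b x) /\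
  (forall x, a <= x <= b -> cont_within df a b x) /\
  (forall x, a < x < b -> derivable_pt_lim f x (df x)).

Definition monotone_on (f : R -> R) (a b : R) : Prop :=
  (forall x y, a <= x -> x <= y -> y <= b -> f x <= f y) \/
  (forall x y, a <= x -> x <= y -> y <= b -> f y <= f x).

Definition Zf (K rho : R -> R) (x : R) : R := sqrt (K x * rho x).
Definition cf (K rho : R -> R) (x : R) : R := sqrt (K x / rho x).

Definition tauf (c : R -> R) (x : R) : R := RInt (fun s => / c s) 0 x.

Definition p0_step (xi : R) : R := if Rle_dec xi 0 then 1 else 0.

(* Integral over the alternating set P_n^{[0,xp]}:
   x_1 in [0,xp], x_j in [0,x_{j-1}] for even j, x_j in [x_{j-1},xp] for
   odd j >= 3; written as an iterated integral.  [acc] holds the already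
   chosen variables in reverse order, [j] is the index of the next one. *)
Fixpoint altI (k j : nat) (xp prev : R) (acc : list R) (F : list R -> R) : R :=
  match k with
  | O => F (rev acc)
  | S k' =>
      let g := fun x => altI k' (S j) xp x (x :: acc) F in
      if Nat.eqb j 1 then RInt g 0 xp
      else if Nat.even j then RInt g 0 prev
      else RInt g prev xp
  end.

Definition alt_integral (n : nat) (xp : R) (F : list R -> R) : R :=
  altI n 1 xp 0 [] F.

Fixpoint alt_sum (l : list R) : R :=
  match l with [] => 0 | a :: l' => a - alt_sum l' end.

Definition hat_t (tau : R -> R) (xs : list R) : R := 2 * alt_sum (map tau xs).

Definition prod_r (r : R -> R) (xs : list R) : R :=
  fold_right (fun x acc => r x * acc) 1 xs.

Definition R_odd (p0 : R -> R) (cm xp : R) (tau r : R -> R) (m : nat) (t : R) : R :=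
  (-1) ^ m * alt_integral (2 * m + 1) xp
    (fun xs => p0 (- cm * (t - hat_t tau xs + tau 0)) * prod_r r xs).

(* T_{2m}(t); for m = 0 this is C_G p0(-c_-(t - t_+)). *)
Definition T_even (p0 : R -> R) (CG cm xp : R) (tau r : R -> R) (m : nat) (t : R) : R :=
  (-1) ^ m * CG * alt_integral (2 * m) xp
    (fun xs => p0 (- cm * (t - hat_t tau xs - tau xp)) * prod_r r xs).

Definition lim_infty (f : R -> R) (l : R) : Prop :=
  forall eps, eps > 0 -> exists M, forall t, t > M -> Rabs (f t - l) < eps.

(* For t beyond all the arrival times hat_t, the step datum equals 1 on the whole
   integration domain, so T_{2m} and R_{2m+1} are eventually constant, equal to iterated
   integrals of prod r over alternating simplices.  The substitution
   u = (ln Z(x) - ln Z(0)) / 2, du = r(x) dx, turns these into iterated integrals of 1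
   over alternating chains in [0, L] with L = ln C_G.  They are the terms of the Neumann
   series of f = g - W f, where W f (s) = int_s^L int_0^y f, whose solutions are
   cosh s / cosh L for g = 1 and sinh (L - s) / cosh L for g = L - s; at s = 0 these give
   sech L and tanh L.  The series converge when |L| < pi/2, i.e. e^-pi < Z_+/Z_- < e^pi:
   choosing w > 1 with w L < pi/2, W maps the weight cos (w s) to at most cos (w s) / w^2.
   Negative L reduces to positive L by the reflection s -> -s. *)

From Pilot Require Import Defs.
From Stdlib Require Import Reals List Lra Lia Classical ClassicalEpsilon FunctionalExtensionality.
From Coquelicot Require Import Coquelicot.
Open Scope R_scope.

Definition Cts (f : R -> R) : Prop := forall x, continuous f x.

Lemma ex_RInt_Cts f a b : Cts f -> ex_RInt f a b.
Proof. intros hf. apply (ex_RInt_continuous (V:=R_CompleteNormedModule)); intros; apply hf. Qed.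

Lemma Defs_RInt_eq f a b : ex_RInt f a b -> Defs.RInt f a b = RInt f a b.
Proof.
  intros hf. unfold Defs.RInt.
  destruct (excluded_middle_informative _) as [hi|hi].
  - rewrite (RInt_Reals f a b (ex_RInt_Reals_0 _ _ _ hf)). apply RiemannInt_P5.
  - exfalso; apply hi; constructor; now apply ex_RInt_Reals_0.
Qed.

Lemma Defs_RInt_ext f g a b : (forall x, Rmin a b <= x <= Rmax a b -> f x = g x) ->
  Defs.RInt f a b = Defs.RInt g a b.
Proof.
  intros hfg. destruct (classic (ex_RInt f a b)) as [hf|hf].
  - assert (hg : ex_RInt g a b) by (eapply ex_RInt_ext; [|exact hf]; intros; apply hfg; lra).
    rewrite !Defs_RInt_eq by assumption. apply RInt_ext; intros; apply hfg; lra.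
  - unfold Defs.RInt. destruct excluded_middle_informative as [[p]|_].
    { exfalso; apply hf; now apply ex_RInt_Reals_1. }
    destruct excluded_middle_informative as [[q]|_]; [|reflexivity].
    exfalso. apply hf. apply ex_RInt_Reals_1 in q. eapply ex_RInt_ext; [|exact q].
    intros; symmetry; apply hfg; lra.
Qed.

Lemma RInt_Cts_minus f g a b : Cts f -> Cts g ->
  RInt (fun x => f x - g x) a b = RInt f a b - RInt g a b.
Proof. intros hf hg. apply (RInt_minus (V:=R_CompleteNormedModule)); apply ex_RInt_Cts; assumption. Qed.

Lemma RInt_Cts_sub0 g a b : Cts g -> RInt g a b = RInt g 0 b - RInt g 0 a.
Proof.
  intros hg. rewrite <- (RInt_Chasles g 0 a b) by (apply ex_RInt_Cts; assumption).
  unfold plus; simpl. unfold Rminus.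
  rewrite Rplus_comm, <- Rplus_assoc, Rplus_opp_l, Rplus_0_l. reflexivity.
Qed.

Lemma is_derive_RInt0 g x : Cts g -> is_derive (fun s => RInt g 0 s) x (g x).
Proof.
  intros hg. apply is_derive_RInt with 0; [|apply hg].
  apply filter_forall. intros y. apply RInt_correct, ex_RInt_Cts, hg.
Qed.

Lemma Cts_RInt0 g : Cts g -> Cts (fun s => RInt g 0 s).
Proof.
  intros hg x. apply (ex_derive_continuous (V:=R_NormedModule)).
  eexists; apply is_derive_RInt0, hg.
Qed.

Lemma Cts_RInt_upto g L : Cts g -> Cts (fun s => RInt g s L).
Proof.
  intros hg x. apply (continuous_ext (fun s => RInt g 0 L - RInt g 0 s)).
  { intros; symmetry; apply RInt_Cts_sub0, hg. }
  apply (continuous_minus (V:=R_NormedModule)); [apply continuous_const|apply Cts_RInt0, hg].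
Qed.

Lemma RInt_by_deriv (F f : R -> R) a b : (forall x, is_derive F x (f x)) ->
  (forall x, ex_derive f x) -> RInt f a b = F b - F a.
Proof.
  intros hF hf. apply is_RInt_unique, (is_RInt_derive F f a b).
  - intros; apply hF.
  - intros; apply (ex_derive_continuous (V:=R_NormedModule)), hf.
Qed.

Lemma RInt_by_interior_deriv (F f : R -> R) a b : a <= b -> Cts f ->
  (forall x, a <= x <= b -> continuity_pt F x) ->
  (forall x, a < x < b -> is_derive F x (f x)) -> RInt f a b = F b - F a.
Proof.
  intros hab hf hF hd.
  destruct (MVT_gen (fun x => RInt f a x - F x) a b (fun _ => 0)) as [c [_ hc]].
  - intros x hx. rewrite Rmin_left, Rmax_right in hx by lra.
    replace 0 with (f x - f x) by ring.
    apply (is_derive_minus (fun y => RInt f a y) F); [|apply hd; lra].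
    apply is_derive_RInt with a; [|apply hf].
    apply filter_forall; intros y. apply RInt_correct, ex_RInt_Cts, hf.
  - intros x hx. rewrite Rmin_left, Rmax_right in hx by lra.
    apply continuity_pt_minus; [|apply hF; lra].
    apply continuity_pt_filterlim.
    apply (continuous_ext (fun s => RInt f 0 s - RInt f 0 a)).
    { intros; symmetry; apply RInt_Cts_sub0, hf. }
    apply (continuous_minus (V:=R_NormedModule)); [apply Cts_RInt0, hf|apply continuous_const].
  - rewrite RInt_point in hc. unfold zero in hc; simpl in hc. lra.
Qed.

Definition clamp (a b x : R) : R := Rmax a (Rmin b x).

Lemma clamp_in a b x : a <= b -> a <= clamp a b x <= b.
Proof. intros; unfold clamp, Rmax, Rmin; repeat destruct Rle_dec; lra. Qed.

Lemma clamp_id a b x : a <= x <= b -> clamp a b x = x.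
Proof. intros; unfold clamp, Rmax, Rmin; repeat destruct Rle_dec; lra. Qed.

Lemma clamp_lipschitz a b x y : a <= b -> Rabs (clamp a b y - clamp a b x) <= Rabs (y - x).
Proof. intros; unfold clamp, Rmax, Rmin; repeat destruct Rle_dec; split_Rabs; lra. Qed.

Lemma continuity_pt_clamp_comp g a b : a <= b ->
  (forall x, a <= x <= b -> cont_within g a b x) ->
  forall x, continuity_pt (fun y => g (clamp a b y)) x.
Proof.
  intros hab hg x eps heps.
  destruct (hg (clamp a b x) (clamp_in a b x hab) eps heps) as [alp [halp hclose]].
  exists alp; split; [exact halp|]. intros y [_ hy]. apply hclose. split.
  - apply clamp_in, hab.
  - simpl in *; unfold R_dist in *.
    eapply Rle_lt_trans; [apply clamp_lipschitz, hab|exact hy].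
Qed.

Definition half_log_ratio (Z : R -> R) (x : R) : R := ln (Z x) / 2 - ln (Z 0) / 2.
Definition refl_coeff (Z dZ : R -> R) (x : R) : R := dZ x / (2 * Z x).

Lemma half_log_ratio_0 Z : half_log_ratio Z 0 = 0.
Proof. unfold half_log_ratio; ring. Qed.

(* [alt_vol L n below s]: iterated integral of 1 over the last n variables of an
   alternating chain in [0,L]; the next variable ranges over [0,s] if [below]
   and over [s,L] otherwise. *)
Fixpoint alt_vol (L : R) (n : nat) (below : bool) (s : R) : R :=
  match n with
  | O => 1
  | S n' => if below then RInt (alt_vol L n' false) 0 s else RInt (alt_vol L n' true) s L
  end.

Lemma Cts_alt_vol L n below : Cts (alt_vol L n below).
Proof.
  revert below; induction n as [|n IH]; intros [|]; simpl.
  1, 2: intros x; apply continuous_const.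
  - apply Cts_RInt0, IH.
  - apply Cts_RInt_upto, IH.
Qed.

Lemma prod_r_app r l1 l2 : prod_r r (l1 ++ l2) = prod_r r l1 * prod_r r l2.
Proof. induction l1 as [|a l1 IH]; simpl; [ring|rewrite IH; ring]. Qed.

Lemma prod_r_rev r l : prod_r r (rev l) = prod_r r l.
Proof. induction l as [|a l IH]; simpl; [reflexivity|]. rewrite prod_r_app, IH; simpl; ring. Qed.

Section ChangeOfVariables.

Variables (xp : R) (Z dZ : R -> R).
Hypotheses (hxp : 0 < xp) (hZpos : forall x, 0 < Z x) (hZc : continuity Z)
  (hdZc : forall x, 0 <= x <= xp -> cont_within dZ 0 xp x)
  (hdZ : forall x, 0 < x < xp -> derivable_pt_lim Z x (dZ x)).

Lemma continuity_half_log_ratio x : continuity_pt (half_log_ratio Z) x.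
Proof.
  unfold half_log_ratio. apply continuity_pt_minus; [|apply continuity_pt_const; intros ? ?; reflexivity].
  apply continuity_pt_div; [|apply continuity_pt_const; intros ? ?; reflexivity|lra].
  apply (continuity_pt_comp Z ln); [apply hZc|].
  apply derivable_continuous_pt. eexists. apply derivable_pt_lim_ln, hZpos.
Qed.

(* [dZ] is only continuous within [0,xp]; composing it with [clamp 0 xp] gives an
   integrand that is continuous on all of R and agrees with the original inside. *)
Lemma RInt_refl_coeff_subst Q a b : Cts Q -> 0 <= a <= b -> b <= xp ->
  ex_RInt (fun x => refl_coeff Z dZ x * Q (half_log_ratio Z x)) a b /\
  RInt (fun x => refl_coeff Z dZ x * Q (half_log_ratio Z x)) a b
  = RInt Q (half_log_ratio Z a) (half_log_ratio Z b).
Proof.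
  intros hQ hab hb. set (v := half_log_ratio Z).
  set (fe := fun x => dZ (clamp 0 xp x) / (2 * Z x) * Q (v x)).
  assert (hfe : Cts fe).
  { intros x. apply continuity_pt_filterlim. unfold fe. apply continuity_pt_mult.
    - apply continuity_pt_div; [apply continuity_pt_clamp_comp; [lra|exact hdZc]| |].
      + apply continuity_pt_mult; [apply continuity_pt_const; intros ? ?; reflexivity|apply hZc].
      + specialize (hZpos x); lra.
    - apply (continuity_pt_comp v Q); [apply continuity_half_log_ratio|].
      apply continuity_pt_filterlim, hQ. }
  assert (heq : forall x, Rmin a b < x < Rmax a b -> fe x = refl_coeff Z dZ x * Q (v x)).
  { intros x hx. rewrite Rmin_left, Rmax_right in hx by lra.
    unfold fe, refl_coeff. rewrite clamp_id by lra. reflexivity. }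
  split; [eapply ex_RInt_ext; [exact heq|apply ex_RInt_Cts, hfe]|].
  rewrite <- (RInt_ext fe) by exact heq.
  rewrite (RInt_by_interior_deriv (fun x => RInt Q 0 (v x)) fe a b); [|lra|exact hfe| |].
  - symmetry; apply RInt_Cts_sub0, hQ.
  - intros x _. apply (continuity_pt_comp v (fun s => RInt Q 0 s)); [apply continuity_half_log_ratio|].
    apply continuity_pt_filterlim, Cts_RInt0, hQ.
  - intros x hx. unfold fe. rewrite clamp_id by lra.
    change (is_derive (fun x => RInt Q 0 (v x)) x (scal (dZ x / (2 * Z x)) (Q (v x)))).
    apply (is_derive_comp (fun s => RInt Q 0 s) v); [apply is_derive_RInt0, hQ|].
    assert (hdx := hdZ x ltac:(lra)). apply is_derive_Reals in hdx.
    unfold v, half_log_ratio. specialize (hZpos x). auto_derive.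
    + split; [eexists; exact hdx|lra].
    + replace (Derive (fun x0 => Z x0) x) with (dZ x) by (symmetry; apply is_derive_unique, hdx). field; lra.
Qed.

Lemma Defs_RInt_refl_coeff_subst Q a b c : Cts Q -> 0 <= a <= b -> b <= xp ->
  Defs.RInt (fun x => c * (refl_coeff Z dZ x * Q (half_log_ratio Z x))) a b
  = c * RInt Q (half_log_ratio Z a) (half_log_ratio Z b).
Proof.
  intros hQ hab hb.
  destruct (RInt_refl_coeff_subst Q a b hQ hab hb) as [hex heq].
  rewrite Defs_RInt_eq by apply (ex_RInt_scal (V:=R_NormedModule) _ a b c hex).
  assert (hscal := RInt_scal (V:=R_CompleteNormedModule) _ a b c hex).
  unfold scal in hscal; simpl in hscal; unfold mult in hscal; simpl in hscal.
  rewrite hscal, heq. reflexivity.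
Qed.

Lemma altI_prod_refl_coeff k : forall j prev acc,
  (1 <= j)%nat -> (j = 1%nat -> prev = 0) -> 0 <= prev <= xp ->
  altI k j xp prev acc (prod_r (refl_coeff Z dZ))
  = prod_r (refl_coeff Z dZ) acc
    * alt_vol (half_log_ratio Z xp) k (Nat.even j) (half_log_ratio Z prev).
Proof.
  induction k as [|k IH]; intros j prev acc hj hj1 hprev.
  - simpl. rewrite prod_r_rev. ring.
  - set (r := refl_coeff Z dZ). set (v := half_log_ratio Z).
    assert (hint : forall a b, 0 <= a <= b -> b <= xp ->
      Defs.RInt (fun x => altI k (S j) xp x (x :: acc) (prod_r r)) a b
      = prod_r r acc * RInt (alt_vol (v xp) k (negb (Nat.even j))) (v a) (v b)).
    { intros a b hab hb. rewrite <- Defs_RInt_refl_coeff_subst by (apply Cts_alt_vol || lra).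
      apply Defs_RInt_ext. intros x hx. rewrite Rmin_left, Rmax_right in hx by lra.
      rewrite IH by (lia || lra). rewrite Nat.even_succ, Nat.negb_even. simpl. fold r v. ring. }
    simpl altI. destruct (Nat.eqb_spec j 1) as [->|hj1'].
    + rewrite (hj1 eq_refl), hint by lra. reflexivity.
    + destruct (Nat.even j) eqn:ej; rewrite hint by lra; simpl.
      * unfold v. rewrite half_log_ratio_0. reflexivity.
      * reflexivity.
Qed.

Lemma alt_integral_prod_refl_coeff n :
  alt_integral n xp (prod_r (refl_coeff Z dZ)) = alt_vol (half_log_ratio Z xp) n false 0.
Proof.
  unfold alt_integral. rewrite altI_prod_refl_coeff by (lia || lra).
  rewrite half_log_ratio_0. simpl. ring.
Qed.

End ChangeOfVariables.

Definition lower_int (f : R -> R) (s : R) : R := RInt f 0 s.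
Definition upper_int (L : R) (f : R -> R) (s : R) : R := RInt f s L.
Definition double_int (L : R) (f : R -> R) : R -> R := upper_int L (lower_int f).

Lemma Cts_double_int L f : Cts f -> Cts (double_int L f).
Proof. intros hf. apply Cts_RInt_upto, Cts_RInt0, hf. Qed.

Lemma Cts_iter_double_int L n f : Cts f -> Cts (Nat.iter n (double_int L) f).
Proof. intros hf; induction n as [|n IH]; [exact hf|apply Cts_double_int, IH]. Qed.

Lemma lower_int_minus f g : Cts f -> Cts g ->
  lower_int (fun x => f x - g x) = fun s => lower_int f s - lower_int g s.
Proof. intros hf hg; apply functional_extensionality; intros s; apply RInt_Cts_minus; assumption. Qed.

Lemma upper_int_minus L f g : Cts f -> Cts g ->
  upper_int L (fun x => f x - g x) = fun s => upper_int L f s - upper_int L g s.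
Proof. intros hf hg; apply functional_extensionality; intros s; apply RInt_Cts_minus; assumption. Qed.

Lemma double_int_minus L f g : Cts f -> Cts g ->
  double_int L (fun x => f x - g x) = fun s => double_int L f s - double_int L g s.
Proof.
  intros hf hg. unfold double_int.
  rewrite lower_int_minus, upper_int_minus by (assumption || apply Cts_RInt0; assumption).
  reflexivity.
Qed.

Lemma alt_vol_even L m : alt_vol L (2 * m) false = Nat.iter m (double_int L) (fun _ => 1).
Proof.
  induction m as [|m IH]; [reflexivity|].
  replace (2 * S m)%nat with (S (S (2 * m))) by lia. simpl Nat.iter. rewrite <- IH. reflexivity.
Qed.

Lemma alt_vol_odd L m :
  alt_vol L (2 * m + 1) false = Nat.iter m (double_int L) (upper_int L (fun _ => 1)).
Proof.
  induction m as [|m IH]; [reflexivity|].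
  replace (2 * S m + 1)%nat with (S (S (2 * m + 1))) by lia. simpl Nat.iter. rewrite <- IH. reflexivity.
Qed.

Lemma neumann_partial_sum (W : (R -> R) -> R -> R) (g f : R -> R) :
  (forall h, Cts h -> Cts (W h)) ->
  (forall h k, Cts h -> Cts k -> W (fun x => h x - k x) = fun s => W h s - W k s) ->
  Cts g -> Cts f -> f = (fun s => g s - W f s) ->
  forall M s, f s = sum_f_R0 (fun m => (-1) ^ m * Nat.iter m W g s) M
                    + (-1) ^ S M * Nat.iter (S M) W f s.
Proof.
  intros hW hlin hg hf hfix.
  assert (hiter_cts : forall n h, Cts h -> Cts (Nat.iter n W h)) by (induction n; simpl; auto).
  assert (hiter_lin : forall n h k, Cts h -> Cts k ->
     Nat.iter n W (fun x => h x - k x) = fun s => Nat.iter n W h s - Nat.iter n W k s).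
  { induction n as [|n IH]; intros h k hh hk; [reflexivity|]. simpl. rewrite IH by assumption. auto. }
  induction M as [|M IH]; intros s.
  - simpl. transitivity (g s - W f s); [exact (f_equal (fun h => h s) hfix)|ring].
  - rewrite IH. simpl sum_f_R0.
    assert (hstep : Nat.iter (S M) W f s = Nat.iter (S M) W g s - Nat.iter (S (S M)) W f s).
    { replace (Nat.iter (S M) W f s) with (Nat.iter (S M) W (fun x => g x - W f x) s)
        by (rewrite <- hfix; reflexivity).
      rewrite hiter_lin by auto. rewrite (Nat.iter_succ_r (S M)). reflexivity. }
    rewrite hstep. simpl pow. change (Nat.iter (S M) W g s) with (W (Nat.iter M W g) s). ring.
Qed.

Lemma double_int_cos_bound L w c f : 0 < w -> 0 <= L -> 0 <= cos (w * L) -> 0 <= c -> Cts f ->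
  (forall y, 0 <= y <= L -> Rabs (f y) <= c * cos (w * y)) ->
  forall s, 0 <= s <= L -> Rabs (double_int L f s) <= c / (w * w) * cos (w * s).
Proof.
  intros hw hL hcL hc hf hbound.
  assert (hlow : forall y, 0 <= y <= L -> Rabs (lower_int f y) <= c / w * sin (w * y)).
  { intros y hy. unfold lower_int.
    eapply Rle_trans; [apply abs_RInt_le; [lra|apply ex_RInt_Cts, hf]|].
    eapply Rle_trans; [apply RInt_le with (g := fun t => c * cos (w * t)); [lra| | |]|].
    - apply ex_RInt_Cts; intros x; apply continuous_Rabs_comp, hf.
    - apply ex_RInt_Cts; intros x; apply (ex_derive_continuous (V:=R_NormedModule)); auto_derive; auto.
    - intros x hx; apply hbound; lra.
    - rewrite (RInt_by_deriv (fun t => c / w * sin (w * t))).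
      + rewrite Rmult_0_r, sin_0. lra.
      + intros x; auto_derive; auto. field; lra.
      + intros x; auto_derive; auto. }
  intros s hs. unfold double_int, upper_int.
  assert (hlc : Cts (lower_int f)) by apply Cts_RInt0, hf.
  eapply Rle_trans; [apply abs_RInt_le; [lra|apply ex_RInt_Cts, hlc]|].
  eapply Rle_trans; [apply RInt_le with (g := fun t => c / w * sin (w * t)); [lra| | |]|].
  - apply ex_RInt_Cts; intros x; apply continuous_Rabs_comp, hlc.
  - apply ex_RInt_Cts; intros x; apply (ex_derive_continuous (V:=R_NormedModule)); auto_derive; auto.
  - intros x hx; apply hlow; lra.
  - rewrite (RInt_by_deriv (fun t => - (c / (w * w)) * cos (w * t))).
    + assert (0 <= c / (w * w) * cos (w * L)) by (apply Rmult_le_pos; [apply Rdiv_le_0_compat; nra|lra]).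
      lra.
    + intros x; auto_derive; auto. field; lra.
    + intros x; auto_derive; auto.
Qed.

Lemma iter_double_int_cos_bound L w c f : 0 < w -> 0 <= L -> 0 <= cos (w * L) -> 0 <= c -> Cts f ->
  (forall y, 0 <= y <= L -> Rabs (f y) <= c * cos (w * y)) ->
  forall M s, 0 <= s <= L ->
  Rabs (Nat.iter M (double_int L) f s) <= c * (/ (w * w)) ^ M * cos (w * s).
Proof.
  intros hw hL hcL hc hf hbound M. induction M as [|M IH]; intros s hs.
  - simpl. rewrite Rmult_1_r. apply hbound, hs.
  - assert (hq : 0 <= (/ (w * w)) ^ M) by (apply pow_le; left; apply Rinv_0_lt_compat; nra).
    simpl Nat.iter. eapply Rle_trans.
    + apply (double_int_cos_bound L w (c * (/ (w * w)) ^ M)); auto.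
      * apply Rmult_le_pos; assumption.
      * apply Cts_iter_double_int, hf.
    + right. simpl pow. field. lra.
Qed.

Lemma infinite_sum_geometric_remainder (u : nat -> R) l c q : 0 <= c -> 0 <= q < 1 ->
  (forall M, Rabs (l - sum_f_R0 u M) <= c * q ^ S M) -> infinite_sum u l.
Proof.
  intros hc hq hrem eps heps.
  destruct (pow_lt_1_zero q ltac:(rewrite Rabs_pos_eq; lra) (eps / (c + 1))
              ltac:(apply Rdiv_lt_0_compat; lra)) as [N hN].
  exists N. intros n hn. unfold R_dist. rewrite Rabs_minus_sym.
  eapply Rle_lt_trans; [apply hrem|].
  assert (hqn := hN (S n) ltac:(lia)). rewrite Rabs_pos_eq in hqn by (apply pow_le; lra).
  assert (c * q ^ S n <= c * (eps / (c + 1))) by (apply Rmult_le_compat_l; lra).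
  assert (c * (eps / (c + 1)) < eps).
  { apply Rlt_le_trans with (eps / (c + 1) * (c + 1)); [|right; field; lra].
    rewrite Rmult_comm. apply Rmult_lt_compat_l; [apply Rdiv_lt_0_compat|]; lra. }
  lra.
Qed.

Lemma cos_weight_exists L : 0 <= L < PI / 2 ->
  exists w, 1 < w /\ 0 < cos (w * L) /\ forall y, 0 <= y <= L -> cos (w * L) <= cos (w * y).
Proof.
  intros hL. pose proof PI_RGT_0.
  exists (PI / (PI / 2 + L)).
  assert (hw : 1 < PI / (PI / 2 + L)) by (apply Rlt_div_r; lra).
  assert (hwL : PI / (PI / 2 + L) * L < PI / 2).
  { unfold Rdiv. rewrite Rmult_assoc, (Rmult_comm (/ _)), <- Rmult_assoc.
    apply Rlt_div_l; [lra|]. nra. }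
  split; [exact hw|split].
  - apply cos_gt_0; nra.
  - intros y hy. destruct (Req_dec y L) as [->|hyL]; [lra|].
    left. apply cos_decreasing_1; nra.
Qed.

Lemma neumann_series_double_int L g f : 0 <= L < PI / 2 -> Cts g -> Cts f ->
  f = (fun s => g s - double_int L f s) -> (forall y, 0 <= y <= L -> Rabs (f y) <= 1) ->
  infinite_sum (fun m => (-1) ^ m * Nat.iter m (double_int L) g 0) (f 0).
Proof.
  intros hL hg hf hfix hbound.
  destruct (cos_weight_exists L hL) as [w [hw [hcL hcos]]].
  assert (hc : 0 <= / cos (w * L)) by (left; apply Rinv_0_lt_compat, hcL).
  assert (hweight : forall y, 0 <= y <= L -> Rabs (f y) <= / cos (w * L) * cos (w * y)).
  { intros y hy. eapply Rle_trans; [apply hbound, hy|].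
    apply (Rmult_le_reg_l (cos (w * L)) _ _ hcL).
    rewrite <- Rmult_assoc, Rinv_r, Rmult_1_l, Rmult_1_r by lra. apply hcos, hy. }
  apply (infinite_sum_geometric_remainder _ _ (/ cos (w * L)) (/ (w * w)) hc).
  - split; [left; apply Rinv_0_lt_compat; nra|].
    rewrite <- Rinv_1. apply Rinv_lt_contravar; nra.
  - intros M.
    rewrite (neumann_partial_sum (double_int L) g f (Cts_double_int L) (double_int_minus L)
               hg hf hfix M 0).
    replace (_ + _ - _) with ((-1) ^ S M * Nat.iter (S M) (double_int L) f 0) by ring.
    rewrite Rabs_mult, pow_1_abs, Rmult_1_l.
    eapply Rle_trans; [apply iter_double_int_cos_bound; auto; lra|].
    rewrite Rmult_0_r, cos_0, Rmult_1_r. lra.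
Qed.

Lemma cosh_pos x : 0 < cosh x.
Proof. unfold cosh. pose proof (exp_pos x); pose proof (exp_pos (- x)); lra. Qed.

Lemma cosh_le a b : 0 <= a <= b -> cosh a <= cosh b.
Proof.
  intros h. unfold cosh. rewrite !exp_Ropp.
  assert (hab : exp a <= exp b)
    by (destruct (Req_dec a b); [subst; lra|left; apply exp_increasing; lra]).
  assert (h1 : 1 <= exp a)
    by (rewrite <- exp_0; destruct (Req_dec a 0); [subst; lra|left; apply exp_increasing; lra]).
  assert (e : / exp a - / exp b = (exp b - exp a) / (exp a * exp b))
    by (field; split; apply Rgt_not_eq, exp_pos).
  assert ((exp b - exp a) / (exp a * exp b) <= exp b - exp a).
  { apply Rle_div_l; [apply Rmult_lt_0_compat; apply exp_pos|].
    rewrite <- (Rmult_1_r (exp b - exp a)) at 1. apply Rmult_le_compat_l; nra. }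
  lra.
Qed.

Lemma abs_sinh_le_cosh x : Rabs (sinh x) <= cosh x.
Proof. unfold sinh, cosh. pose proof (exp_pos x); pose proof (exp_pos (- x)). split_Rabs; lra. Qed.

Definition cosh_ratio (L s : R) : R := cosh s / cosh L.
Definition sinh_ratio (L s : R) : R := sinh (L - s) / cosh L.

Lemma Cts_cosh_ratio L : Cts (cosh_ratio L).
Proof.
  intros x. apply (ex_derive_continuous (V:=R_NormedModule)).
  pose proof (cosh_pos L) as hc. unfold cosh_ratio, cosh in *. auto_derive. lra.
Qed.

Lemma Cts_sinh_ratio L : Cts (sinh_ratio L).
Proof.
  intros x. apply (ex_derive_continuous (V:=R_NormedModule)).
  pose proof (cosh_pos L) as hc. unfold sinh_ratio, sinh, cosh in *. auto_derive. lra.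
Qed.

Ltac solve_hyperbolic_deriv :=
  intros; unfold sinh, cosh in *; auto_derive; repeat split; try lra; unfold Rminus; field; lra.

Lemma cosh_ratio_fixpoint L : cosh_ratio L = fun s => 1 - double_int L (cosh_ratio L) s.
Proof.
  apply functional_extensionality; intros s. unfold double_int, upper_int, lower_int, cosh_ratio.
  pose proof (cosh_pos L) as hc. unfold cosh in hc.
  rewrite (RInt_ext _ (fun y => sinh y / cosh L)).
  2:{ intros y _. rewrite (RInt_by_deriv (fun z => sinh z / cosh L)) by solve_hyperbolic_deriv.
      rewrite sinh_0. simpl. unfold Rdiv. ring. }
  rewrite (RInt_by_deriv (fun y => cosh y / cosh L)) by solve_hyperbolic_deriv.
  field. unfold cosh; lra.
Qed.

Lemma sinh_ratio_fixpoint L :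
  sinh_ratio L = fun s => upper_int L (fun _ => 1) s - double_int L (sinh_ratio L) s.
Proof.
  apply functional_extensionality; intros s. unfold double_int, upper_int, lower_int, sinh_ratio.
  pose proof (cosh_pos L) as hc. unfold cosh in hc.
  rewrite (RInt_ext (fun y => RInt (fun x => sinh (L - x) / cosh L) 0 y)
             (fun y => 1 - cosh (L - y) / cosh L)).
  2:{ intros y _. rewrite (RInt_by_deriv (fun z => - cosh (L - z) / cosh L)) by solve_hyperbolic_deriv.
      rewrite Rminus_0_r. simpl. field. unfold cosh; lra. }
  rewrite (RInt_by_deriv (fun y => y + sinh (L - y) / cosh L) (fun y => 1 - cosh (L - y) / cosh L))
    by solve_hyperbolic_deriv.
  rewrite (RInt_by_deriv (fun y => y) (fun _ => 1)) by (intros; auto_derive; auto).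
  rewrite Rminus_diag, sinh_0. field. unfold cosh; lra.
Qed.

Lemma abs_cosh_ratio_le_1 L y : 0 <= y <= L -> Rabs (cosh_ratio L y) <= 1.
Proof.
  intros hy. pose proof (cosh_pos L); pose proof (cosh_pos y). unfold cosh_ratio.
  rewrite Rabs_pos_eq by (apply Rdiv_le_0_compat; lra).
  apply Rle_div_l; [lra|]. rewrite Rmult_1_l. apply cosh_le, hy.
Qed.

Lemma abs_sinh_ratio_le_1 L y : 0 <= y <= L -> Rabs (sinh_ratio L y) <= 1.
Proof.
  intros hy. pose proof (cosh_pos L). unfold sinh_ratio, Rdiv.
  rewrite Rabs_mult, (Rabs_pos_eq (/ _)) by (left; apply Rinv_0_lt_compat; lra).
  apply Rle_div_l; [lra|]. rewrite Rmult_1_l.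
  eapply Rle_trans; [apply abs_sinh_le_cosh|apply cosh_le; lra].
Qed.

Lemma alt_vol_series_nonneg L : 0 <= L < PI / 2 ->
  infinite_sum (fun m => (-1) ^ m * alt_vol L (2 * m) false 0) (/ cosh L) /\
  infinite_sum (fun m => (-1) ^ m * alt_vol L (2 * m + 1) false 0) (tanh L).
Proof.
  intros hL. split.
  - replace (/ cosh L) with (cosh_ratio L 0)
      by (unfold cosh_ratio; rewrite cosh_0; field; apply Rgt_not_eq, cosh_pos).
    replace (fun m => _) with (fun m => (-1) ^ m * Nat.iter m (double_int L) (fun _ => 1) 0)
      by (apply functional_extensionality; intros m; rewrite alt_vol_even; reflexivity).
    apply neumann_series_double_int; [exact hL|intros x; apply continuous_const|apply Cts_cosh_ratio|
      apply cosh_ratio_fixpoint|apply abs_cosh_ratio_le_1].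
  - replace (tanh L) with (sinh_ratio L 0) by (unfold sinh_ratio, tanh; rewrite Rminus_0_r; reflexivity).
    replace (fun m => _)
      with (fun m => (-1) ^ m * Nat.iter m (double_int L) (upper_int L (fun _ => 1)) 0)
      by (apply functional_extensionality; intros m; rewrite alt_vol_odd; reflexivity).
    apply neumann_series_double_int; [exact hL|apply Cts_RInt_upto; intros x; apply continuous_const|
      apply Cts_sinh_ratio|apply sinh_ratio_fixpoint|apply abs_sinh_ratio_le_1].
Qed.

Lemma RInt_opp_bounds (f g : R -> R) k a b : Cts f -> Cts g -> (forall y, f (- y) = k * g y) ->
  RInt f (- a) (- b) = - k * RInt g a b.
Proof.
  intros hf hg hfg.
  assert (hsub := RInt_comp_lin (V:=R_CompleteNormedModule) f (-1) 0 a b (ex_RInt_Cts _ _ _ hf)).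
  replace (-1 * a + 0) with (- a) in hsub by ring. replace (-1 * b + 0) with (- b) in hsub by ring.
  rewrite <- hsub.
  rewrite (RInt_ext _ (fun y => scal (- k) (g y))).
  2:{ intros x _. unfold scal; simpl; unfold mult; simpl.
      replace (-1 * x + 0) with (- x) by ring. rewrite hfg. ring. }
  rewrite (RInt_scal (V:=R_CompleteNormedModule)) by (apply ex_RInt_Cts, hg).
  reflexivity.
Qed.

Lemma alt_vol_opp L n : forall below s, alt_vol (- L) n below (- s) = (-1) ^ n * alt_vol L n below s.
Proof.
  induction n as [|n IH]; intros [|] s; simpl alt_vol.
  1, 2: simpl; ring.
  - rewrite <- Ropp_0 at 1.
    rewrite (RInt_opp_bounds _ (alt_vol L n false) ((-1) ^ n)) by (apply Cts_alt_vol || apply IH).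
    simpl. ring.
  - rewrite (RInt_opp_bounds _ (alt_vol L n true) ((-1) ^ n)) by (apply Cts_alt_vol || apply IH).
    simpl. ring.
Qed.

Lemma alt_vol_series L : Rabs L < PI / 2 ->
  infinite_sum (fun m => (-1) ^ m * alt_vol L (2 * m) false 0) (/ cosh L) /\
  infinite_sum (fun m => (-1) ^ m * alt_vol L (2 * m + 1) false 0) (tanh L).
Proof.
  intros hL. destruct (Rle_dec 0 L) as [hL0|hL0].
  { apply alt_vol_series_nonneg. rewrite Rabs_pos_eq in hL; lra. }
  rewrite Rabs_left in hL by lra.
  assert (hrefl : forall n, alt_vol L n false 0 = (-1) ^ n * alt_vol (- L) n false 0).
  { intros n. rewrite <- Ropp_0 at 2. rewrite alt_vol_opp, <- Rmult_assoc, <- pow_add.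
    replace (n + n)%nat with (2 * n)%nat by lia. rewrite pow_1_even. ring. }
  destruct (alt_vol_series_nonneg (- L) ltac:(lra)) as [heven hodd].
  split; apply is_series_Reals.
  - replace (/ cosh L) with (/ cosh (- L)) by (unfold cosh; rewrite Ropp_involutive, Rplus_comm; reflexivity).
    eapply is_series_ext; [|apply is_series_Reals, heven].
    intros m. rewrite hrefl, pow_1_even. simpl. ring.
  - replace (tanh L) with (- tanh (- L))
      by (unfold tanh, sinh, cosh; rewrite Ropp_involutive; field;
          pose proof (cosh_pos L) as h; unfold cosh in h; lra).
    eapply is_series_ext;
      [|apply (is_series_opp (K:=R_AbsRing) (V:=R_NormedModule)), is_series_Reals, hodd].
    intros m. rewrite hrefl, Nat.add_1_r, pow_1_odd. unfold opp; simpl. ring.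
Qed.

Lemma alt_sum_bound (l : list R) B : (forall y, In y l -> Rabs y <= B) ->
  Rabs (alt_sum l) <= INR (length l) * B.
Proof.
  induction l as [|a l IH]; intros hl; cbn [alt_sum length].
  - rewrite Rabs_R0; simpl INR; lra.
  - rewrite S_INR. assert (ha := hl a (or_introl eq_refl)).
    assert (htl := IH (fun y hy => hl y (or_intror hy))).
    eapply Rle_trans; [apply Rabs_triang|]. rewrite Rabs_Ropp. lra.
Qed.

Lemma hat_t_bound tau xp B xs : (forall x, 0 <= x <= xp -> Rabs (tau x) <= B) ->
  List.Forall (fun x => 0 <= x <= xp) xs -> Rabs (hat_t tau xs) <= 2 * (INR (length xs) * B).
Proof.
  intros htau hxs. unfold hat_t. rewrite Rabs_mult, Rabs_pos_eq by lra.
  apply Rmult_le_compat_l; [lra|]. rewrite <- (length_map tau).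
  apply alt_sum_bound. intros y hy. apply in_map_iff in hy. destruct hy as [x [<- hx]].
  apply htau. rewrite List.Forall_forall in hxs. apply hxs, hx.
Qed.

Lemma altI_ext k : forall j xp prev acc (F G : list R -> R), 0 <= prev <= xp ->
  (forall xs, List.Forall (fun x => 0 <= x <= xp) xs -> length xs = k ->
     F (rev acc ++ xs) = G (rev acc ++ xs)) ->
  altI k j xp prev acc F = altI k j xp prev acc G.
Proof.
  induction k as [|k IH]; intros j xp prev acc F G hprev hFG.
  - simpl. rewrite <- (app_nil_r (rev acc)). apply hFG; [constructor|reflexivity].
  - simpl altI.
    assert (hstep : forall x, 0 <= x <= xp ->
       altI k (S j) xp x (x :: acc) F = altI k (S j) xp x (x :: acc) G).
    { intros x hx. apply IH; [exact hx|]. intros xs hxs hl. simpl rev. rewrite <- app_assoc.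
      apply hFG; [constructor; assumption|simpl; lia]. }
    destruct (Nat.eqb j 1); [|destruct (Nat.even j)]; apply Defs_RInt_ext; intros x hx;
      apply hstep; unfold Rmin, Rmax in hx; destruct Rle_dec; lra.
Qed.

Lemma alt_integral_ext n xp F G : 0 <= xp ->
  (forall xs, List.Forall (fun x => 0 <= x <= xp) xs -> length xs = n -> F xs = G xs) ->
  alt_integral n xp F = alt_integral n xp G.
Proof. intros hxp hFG. apply altI_ext; [lra|]. intros xs. apply hFG. Qed.

Lemma p0_step_nonpos xi : xi <= 0 -> p0_step xi = 1.
Proof. intros h. unfold p0_step. destruct Rle_dec; [reflexivity|contradiction]. Qed.

Lemma lim_infty_eventually_const f l M : (forall t, t > M -> f t = l) -> lim_infty f l.
Proof.
  intros hf eps heps. exists M. intros t ht. rewrite hf, Rminus_diag, Rabs_R0 by exact ht. lra.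
Qed.

Section LateTimeLimits.

Variables (xp B cm CG : R) (Z dZ tau : R -> R).
Hypotheses (hxp : 0 < xp) (hZpos : forall x, 0 < Z x) (hZc : continuity Z)
  (hdZc : forall x, 0 <= x <= xp -> cont_within dZ 0 xp x)
  (hdZ : forall x, 0 < x < xp -> derivable_pt_lim Z x (dZ x))
  (htau : forall x, 0 <= x <= xp -> Rabs (tau x) <= B) (hcm : 0 <= cm).

Lemma lim_T_even m :
  lim_infty (T_even p0_step CG cm xp tau (refl_coeff Z dZ) m)
    ((-1) ^ m * CG * alt_vol (half_log_ratio Z xp) (2 * m) false 0).
Proof.
  apply (lim_infty_eventually_const _ _ (2 * (INR (2 * m) * B) + B)). intros t ht.
  unfold T_even. rewrite <- (alt_integral_prod_refl_coeff xp Z dZ) by assumption.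
  f_equal. apply alt_integral_ext; [lra|]. intros xs hxs hlen.
  rewrite p0_step_nonpos; [ring|].
  assert (hhat := hat_t_bound tau xp B xs htau hxs). rewrite hlen in hhat.
  assert (hend := htau xp ltac:(lra)).
  assert (0 <= t - hat_t tau xs - tau xp) by (split_Rabs; lra). nra.
Qed.

Lemma lim_R_odd m :
  lim_infty (R_odd p0_step cm xp tau (refl_coeff Z dZ) m)
    ((-1) ^ m * alt_vol (half_log_ratio Z xp) (2 * m + 1) false 0).
Proof.
  apply (lim_infty_eventually_const _ _ (2 * (INR (2 * m + 1) * B) + B)). intros t ht.
  unfold R_odd. rewrite <- (alt_integral_prod_refl_coeff xp Z dZ) by assumption.
  f_equal. apply alt_integral_ext; [lra|]. intros xs hxs hlen.
  rewrite p0_step_nonpos; [ring|].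
  assert (hhat := hat_t_bound tau xp B xs htau hxs). rewrite hlen in hhat.
  assert (hend := htau 0 ltac:(lra)).
  assert (0 <= t - hat_t tau xs + tau 0) by (split_Rabs; lra). nra.
Qed.

End LateTimeLimits.

Lemma continuity_pt_eq_of_near f a c : continuity_pt f a ->
  (forall delta, delta > 0 -> exists x, Rabs (x - a) < delta /\ f x = c) -> f a = c.
Proof.
  intros hf hnear. apply NNPP; intros hne.
  assert (heps : Rabs (f a - c) > 0) by (apply Rabs_pos_lt; lra).
  destruct (hf _ heps) as [delta [hdelta hclose]].
  destruct (hnear delta hdelta) as [x [hx hfx]].
  destruct (Req_dec x a) as [->|hxa]; [lra|].
  assert (h := hclose x (conj (conj I (not_eq_sym hxa)) hx)). simpl in h; unfold R_dist in h.
  rewrite hfx, Rabs_minus_sym in h. lra.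
Qed.

Lemma continuity_pt_eq_left f a c : continuity_pt f a -> (forall x, x < a -> f x = c) -> f a = c.
Proof.
  intros hf hleft. apply continuity_pt_eq_of_near; [exact hf|]. intros delta hdelta.
  exists (a - delta / 2). split; [|apply hleft; lra].
  replace (a - delta / 2 - a) with (- (delta / 2)) by ring. rewrite Rabs_Ropp, Rabs_pos_eq; lra.
Qed.

Lemma continuity_pt_eq_right f a c : continuity_pt f a -> (forall x, a < x -> f x = c) -> f a = c.
Proof.
  intros hf hright. apply continuity_pt_eq_of_near; [exact hf|]. intros delta hdelta.
  exists (a + delta / 2). split; [|apply hright; lra].
  replace (a + delta / 2 - a) with (delta / 2) by ring. rewrite Rabs_pos_eq; lra.
Qed.

Section Medium.

Variables (K rho : R -> R).
Hypotheses (hKpos : forall x, 0 < K x) (hrhopos : forall x, 0 < rho x)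
  (hKc : continuity K) (hrhoc : continuity rho).

Lemma Zf_pos x : 0 < Zf K rho x.
Proof. apply sqrt_lt_R0, Rmult_lt_0_compat; auto. Qed.

Lemma continuity_Zf : continuity (Zf K rho).
Proof.
  intros x. unfold Zf. change (continuity_pt (comp sqrt (fun y => K y * rho y)) x).
  apply continuity_pt_comp; [apply continuity_pt_mult; auto|].
  apply continuity_pt_sqrt. left; apply Rmult_lt_0_compat; auto.
Qed.

Lemma Cts_inv_cf : Cts (fun s => / cf K rho s).
Proof.
  intros x. apply continuity_pt_filterlim. unfold cf.
  assert (0 < sqrt (K x / rho x)) by (apply sqrt_lt_R0, Rdiv_lt_0_compat; auto).
  apply continuity_pt_inv; [|lra].
  change (continuity_pt (comp sqrt (fun y => K y / rho y)) x).
  apply continuity_pt_comp; [apply continuity_pt_div; auto; apply Rgt_not_eq, hrhopos|].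
  apply continuity_pt_sqrt. left; apply Rdiv_lt_0_compat; auto.
Qed.

End Medium.

Lemma tauf_bound c xp : Cts (fun s => / c s) -> 0 <= xp ->
  forall x, 0 <= x <= xp -> Rabs (tauf c x) <= RInt (fun s => Rabs (/ c s)) 0 xp.
Proof.
  intros hc hxp x hx. unfold tauf. rewrite Defs_RInt_eq by (apply ex_RInt_Cts, hc).
  assert (habs : Cts (fun s => Rabs (/ c s))) by (intros y; apply continuous_Rabs_comp, hc).
  eapply Rle_trans; [apply abs_RInt_le; [lra|apply ex_RInt_Cts, hc]|].
  rewrite <- (RInt_Chasles (V:=R_CompleteNormedModule) _ 0 x xp) by (apply ex_RInt_Cts, habs).
  assert (0 <= RInt (fun s => Rabs (/ c s)) x xp)
    by (apply RInt_ge_0; [lra|apply ex_RInt_Cts, habs|intros; apply Rabs_pos]).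
  unfold plus; simpl. lra.
Qed.

Lemma ln_sqrt x : 0 < x -> ln (sqrt x) = ln x / 2.
Proof.
  intros hx. assert (hs : 0 < sqrt x) by (apply sqrt_lt_R0, hx).
  rewrite <- (sqrt_sqrt x) at 2 by lra. rewrite ln_mult by exact hs. field.
Qed.

Lemma half_log_ratio_eq Z x : 0 < Z 0 -> 0 < Z x -> half_log_ratio Z x = ln (sqrt (Z x / Z 0)).
Proof.
  intros h0 hx. unfold half_log_ratio.
  rewrite ln_sqrt, ln_div by (try apply Rdiv_lt_0_compat; assumption). field.
Qed.

Lemma abs_ln_sqrt_lt q : exp (- PI) < q < exp PI -> Rabs (ln (sqrt q)) < PI / 2.
Proof.
  intros [hlo hhi]. assert (hq : 0 < q) by (pose proof (exp_pos (- PI)); lra).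
  rewrite ln_sqrt by exact hq.
  assert (h1 := ln_increasing _ _ (exp_pos _) hlo). rewrite ln_exp in h1.
  assert (h2 := ln_increasing _ _ hq hhi). rewrite ln_exp in h2.
  apply Rabs_def1; lra.
Qed.

Lemma sqrt_ratio_sech a b : 0 < a -> 0 < b ->
  sqrt (b / a) * / cosh (ln (sqrt (b / a))) = 2 * b / (a + b).
Proof.
  intros ha hb. assert (hs : 0 < sqrt (b / a)) by (apply sqrt_lt_R0, Rdiv_lt_0_compat; assumption).
  assert (hss : sqrt (b / a) * sqrt (b / a) = b / a) by (apply sqrt_sqrt; left; apply Rdiv_lt_0_compat; assumption).
  unfold cosh. rewrite exp_Ropp, exp_ln by exact hs.
  set (s := sqrt (b / a)) in *. replace b with (s * s * a) by (rewrite hss; field; lra).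
  field. repeat split; nra.
Qed.

Lemma tanh_ln_sqrt_ratio a b : 0 < a -> 0 < b -> tanh (ln (sqrt (b / a))) = (b - a) / (a + b).
Proof.
  intros ha hb. assert (hs : 0 < sqrt (b / a)) by (apply sqrt_lt_R0, Rdiv_lt_0_compat; assumption).
  assert (hss : sqrt (b / a) * sqrt (b / a) = b / a) by (apply sqrt_sqrt; left; apply Rdiv_lt_0_compat; assumption).
  unfold tanh, sinh, cosh. rewrite exp_Ropp, exp_ln by exact hs.
  set (s := sqrt (b / a)) in *. replace b with (s * s * a) by (rewrite hss; field; lra).
  field. repeat split; nra.
Qed.

Lemma infinite_sum_scal c u l : infinite_sum u l -> infinite_sum (fun m => c * u m) (c * l).
Proof. intros h. apply is_series_Reals, (is_series_scal_l (V:=R_NormedModule)), is_series_Reals, h. Qed.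

Theorem mainTheorem3
  (xp : R) (K rho dK drho dZ : R -> R) (Km rhom Kp rhop : R)
  (hxp : 0 < xp)
  (hKpos : forall x, 0 < K x) (hrhopos : forall x, 0 < rho x)
  (hKc : continuity K) (hrhoc : continuity rho)
  (hKm : forall x, x < 0 -> K x = Km) (hrhom : forall x, x < 0 -> rho x = rhom)
  (hKp : forall x, xp < x -> K x = Kp) (hrhop : forall x, xp < x -> rho x = rhop)
  (hKC1 : C1_on K dK 0 xp) (hrhoC1 : C1_on rho drho 0 xp)
  (hZC1 : C1_on (Zf K rho) dZ 0 xp)
  (hmono : monotone_on (Zf K rho) 0 xp)
  (hratio : exp (- PI) < sqrt (Kp * rhop) / sqrt (Km * rhom) < exp PI) :
  let Zm := sqrt (Km * rhom) in
  let Zp := sqrt (Kp * rhop) in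
  let cm := sqrt (Km / rhom) in
  let CG := sqrt (Zp / Zm) in
  let tau := tauf (cf K rho) in
  let r := fun x => dZ x / (2 * Zf K rho x) in
  (exists Tinf : nat -> R,
      (forall m, lim_infty (T_even p0_step CG cm xp tau r m) (Tinf m)) /\
      infinite_sum Tinf (2 * Zp / (Zm + Zp)) /\
      2 * Zp / (Zm + Zp) = CG * / cosh (ln CG)) /\
  (exists Rinf : nat -> R,
      (forall m, lim_infty (R_odd p0_step cm xp tau r m) (Rinf m)) /\
      infinite_sum Rinf ((Zp - Zm) / (Zm + Zp)) /\
      (Zp - Zm) / (Zm + Zp) = tanh (ln CG)).
Proof.
  intros Zm Zp cm CG tau r.
  destruct hZC1 as [_ [hdZc hdZ]].
  pose proof (Zf_pos K rho hKpos hrhopos) as hZpos.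
  pose proof (continuity_Zf K rho hKpos hrhopos hKc hrhoc) as hZc.
  assert (hZ0 : Zf K rho 0 = Zm).
  { apply continuity_pt_eq_left; [apply hZc|]. intros x hx. unfold Zf. rewrite hKm, hrhom by exact hx. reflexivity. }
  assert (hZxp : Zf K rho xp = Zp).
  { apply continuity_pt_eq_right; [apply hZc|]. intros x hx. unfold Zf. rewrite hKp, hrhop by exact hx. reflexivity. }
  assert (hZm : 0 < Zm) by (rewrite <- hZ0; apply hZpos).
  assert (hZp : 0 < Zp) by (rewrite <- hZxp; apply hZpos).
  assert (hL : half_log_ratio (Zf K rho) xp = ln CG)
    by (rewrite half_log_ratio_eq, hZ0, hZxp by apply hZpos; reflexivity).
  pose proof (tauf_bound (cf K rho) xp (Cts_inv_cf K rho hKpos hrhopos hKc hrhoc) (Rlt_le _ _ hxp)) as htau.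
  assert (hcm : 0 <= cm) by apply sqrt_pos.
  destruct (alt_vol_series (ln CG) (abs_ln_sqrt_lt _ hratio)) as [heven hodd].
  split.
  - exists (fun m => (-1) ^ m * CG * alt_vol (ln CG) (2 * m) false 0). split; [|split].
    + intros m. rewrite <- hL. eapply lim_T_even; eassumption.
    + rewrite <- (sqrt_ratio_sech Zm Zp hZm hZp).
      replace (fun m => _) with (fun m => CG * ((-1) ^ m * alt_vol (ln CG) (2 * m) false 0))
        by (apply functional_extensionality; intros m; ring).
      apply infinite_sum_scal, heven.
    + symmetry; apply sqrt_ratio_sech; assumption.
  - exists (fun m => (-1) ^ m * alt_vol (ln CG) (2 * m + 1) false 0). split; [|split].
    + intros m. rewrite <- hL. eapply lim_R_odd; eassumption.
    + rewrite <- (tanh_ln_sqrt_ratio Zm Zp hZm hZp). exact hodd.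
    + symmetry; apply tanh_ln_sqrt_ratio; assumption.
Qed.
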